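(* Let $q$ be a prime power and let $\mathbf{G}\in\mathbb{F}_q^{k\times n}$ be a generator matrix of a linear $[n,k]_q$ code. Consider a coded storage system with files $f_1,\dots,f_k$ in which, for each $i\in[k]$, file $f_i$ has a given list $\mathcal{R}_i=(R_{i,1},\dots,R_{i,t_i})$ of $t_i\ge1$ recovery sets, each of size $1$ or $2$, and all servers have service rate $1$. Then: (i) if $\tilde{\boldsymbol{x}}^\star=(\tilde x^\star_{i,j})$ is a maximum matching vector in the graph representation of the code, the vector $\boldsymbol{\lambda}$ with $\lambda_i=\sum_{j=1}^{t_i}\tilde x^\star_{i,j}$ is a maximum demand vector in $\mathcal{S}_I(\mathbf{G})$; and (ii) for every maximum demand vector $\boldsymbol{\lambda}^\star$ of $\mathcal{S}_I(\mathbf{G})$ there exists a maximum matching vector $\tilde{\boldsymbol{x}}^\star$ in the graph representation with $\lambda^\star_i=\sum_{j=1}^{t_i}\tilde x^\star_{i,j}$ for all $i\in[k]$.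
   Context: Let $\mathbf{g}_1,\dots,\mathbf{g}_n$ be the columns of $\mathbf{G}$ and $\mathbf{e}_i$ the $i$-th unit vector. A set $R\subseteq[n]$ is a recovery set for file $f_i$ if there exist nonzero $\alpha_j\in\mathbb{F}_q$ ($j\in R$) with $\sum_{j\in R}\alpha_j\mathbf{g}_j=\mathbf{e}_i$. The integral service rate region $\mathcal{S}_I(\mathbf{G})$ is the set of $\boldsymbol{\lambda}$ for which there exist integers $\lambda_{i,j}\ge0$ with $\sum_{j=1}^{t_i}\lambda_{i,j}=\lambda_i$ for all $i$ and $\sum_{i=1}^k\sum_{j\in[t_i]:\,l\in R_{i,j}}\lambda_{i,j}\le1$ for every server $l\in[n]$. A maximum demand vector of $\mathcal{S}_I(\mathbf{G})$ is a $\boldsymbol{\lambda}\in\mathcal{S}_I(\mathbf{G})$ maximizing $\sum_i\lambda_i$ over $\mathcal{S}_I(\mathbf{G})$. The graph representation is the (multi)graph with vertex set $[n]$ plus one new dummy vertex $d_{i,j}$ for each recovery set $R_{i,j}$ of size 1, and edges indexed by $(i,j)$: if $R_{i,j}=\{a,b\}$ the edge joins $a$ and $b$; if $R_{i,j}=\{r\}$ it joins $r$ and $d_{i,j}$. A matching vector assigns $\tilde x_e\in\{0,1\}$ to edges so that at each vertex the sum over incident edges is at most 1; a maximum matching vector maximizes $\sum_e\tilde x_e$. *)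

From mathcomp Require Import all_boot all_order all_algebra.
Set Implicit Arguments. Unset Strict Implicit. Unset Printing Implicit Defensive.
Import GRing.Theory.

Section Defs.
Variables (F : finFieldType) (k n : nat).

Definition recovery_set (G : 'M[F]_(k, n)) (i : 'I_k) (R : {set 'I_n}) : Prop :=
  exists alpha : 'I_n -> F,
    (forall j, j \in R -> alpha j != 0%R) /\
    (\sum_(j in R) alpha j *: col j G)%R = delta_mx i (@ord0 0).

Variable t : 'I_k -> nat.

Definition edge := {i : 'I_k & 'I_(t i)}.

Variable Rs : forall i : 'I_k, 'I_(t i) -> {set 'I_n}.

Definition Rset (e : edge) : {set 'I_n} := Rs (tagged e).

Definition in_SI (lam : 'I_k -> nat) : Prop :=
  exists lij : edge -> nat,
    (forall i : 'I_k, \sum_(j < t i) lij (Tagged (fun i => 'I_(t i)) j) = lam i) /\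
    (forall l : 'I_n, \sum_(e : edge | l \in Rset e) lij e <= 1).

Definition max_demand (lam : 'I_k -> nat) : Prop :=
  in_SI lam /\
  forall mu, in_SI mu -> \sum_(i < k) mu i <= \sum_(i < k) lam i.

(* Vertices of the graph representation: servers [n] plus one dummy
   vertex d_e for each edge e (the dummy vertex of e is only incident
   to e, and only when R_e has size 1; otherwise it is isolated). *)
Definition vertex := ('I_n + edge)%type.

Definition incident (e : edge) (v : vertex) : bool :=
  match v with
  | inl l => l \in Rset e
  | inr d => (d == e) && (#|Rset e| == 1)
  end.

Definition matching_vector (x : edge -> nat) : Prop :=
  (forall e, x e <= 1) /\
  (forall v : vertex, \sum_(e : edge | incident e v) x e <= 1).

Definition max_matching_vector (x : edge -> nat) : Prop :=
  matching_vector x /\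
  forall y, matching_vector y -> \sum_(e : edge) y e <= \sum_(e : edge) x e.

End Defs.

(** An integral allocation [lij] of requests to recovery sets is already a
    matching vector of the graph representation: every recovery set is
    nonempty, so the unit capacity of a server in it caps [lij e] at 1, and
    this is exactly the constraint at the dummy vertex [d_e].  Conversely the
    server constraints of a matching vector are the capacity constraints of
    the service rate region.  Hence [S_I(G)] is the set of demand vectors of
    matching vectors, the total demand equals the size of the matching, and
    the two maximisation problems have the same optima. *)
From mathcomp Require Import all_boot all_order all_algebra.

Set Implicit Arguments.
Unset Strict Implicit.
Unset Printing Implicit Defensive.

Section ServiceRateMatching.
Variables (k n : nat) (t : 'I_k -> nat) (Rs : forall i : 'I_k, 'I_(t i) -> {set 'I_n}).

Definition demand (x : edge t -> nat) (i : 'I_k) : nat :=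
  \sum_(j < t i) x (Tagged (fun i => 'I_(t i)) j).

Definition server_load (x : edge t -> nat) (l : 'I_n) : nat :=
  \sum_(e : edge t | l \in Rset Rs e) x e.

Lemma sum_demand (x : edge t -> nat) :
  \sum_(i < k) demand x i = \sum_(e : edge t) x e.
Proof. by rewrite sig_big_dep; apply: eq_big => [[i j]|[i j]]. Qed.

Hypothesis Rset_neq0 : forall e : edge t, 0 < #|Rset Rs e|.

Lemma server_load_le1_edge (x : edge t -> nat) :
  (forall l, server_load x l <= 1) -> forall e, x e <= 1.
Proof.
move=> load_le1 e; have /card_gt0P [l l_e] := Rset_neq0 e.
by apply: leq_trans (load_le1 l); rewrite /server_load (bigD1 e) //= leq_addr.
Qed.

Lemma matching_vectorP (x : edge t -> nat) :
  matching_vector Rs x <-> forall l, server_load x l <= 1.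
Proof.
split=> [[_ match_x] l | load_le1]; first exact: (match_x (inl l)).
have x_le1 := server_load_le1_edge load_le1.
split=> // -[l | d] /=; first exact: load_le1.
rewrite big_mkcond (bigD1 d) //= eqxx big1 ?addn0; first by case: ifP.
by move=> e /negbTE; rewrite eq_sym => ->.
Qed.

Lemma in_SIP (lam : 'I_k -> nat) :
  in_SI Rs lam <-> exists2 x, matching_vector Rs x & lam =1 demand x.
Proof.
split=> [[x [dem_x load_x]] | [x /matching_vectorP load_x lam_x]].
  by exists x; [apply/matching_vectorP | move=> i; rewrite -dem_x].
by exists x; split=> // i; rewrite lam_x.
Qed.

Lemma max_matching_max_demand (x : edge t -> nat) :
  max_matching_vector Rs x -> max_demand Rs (demand x).
Proof.
move=> [match_x x_max]; split; first by apply/in_SIP; exists x.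
move=> mu /in_SIP [y match_y mu_y].
by rewrite (eq_bigr _ (fun i _ => mu_y i)) !sum_demand; apply: x_max.
Qed.

Lemma max_demand_max_matching (lam : 'I_k -> nat) :
  max_demand Rs lam -> exists2 x, max_matching_vector Rs x & lam =1 demand x.
Proof.
move=> [/in_SIP [x match_x lam_x] lam_max]; exists x => //; split=> // y match_y.
rewrite -!sum_demand -(eq_bigr _ (fun i _ => lam_x i)).
by apply: lam_max; apply/in_SIP; exists y.
Qed.

End ServiceRateMatching.

Theorem corollary4 (F : finFieldType) (k n : nat) (G : 'M[F]_(k, n))
  (t : 'I_k -> nat) (Rs : forall i : 'I_k, 'I_(t i) -> {set 'I_n}) :
  \rank G = k ->
  (forall i, 0 < t i) ->
  (forall i (j : 'I_(t i)), #|Rs i j| = 1 \/ #|Rs i j| = 2) ->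
  (forall i (j : 'I_(t i)), recovery_set G i (Rs i j)) ->
  (forall x : edge t -> nat, max_matching_vector Rs x ->
     max_demand Rs (fun i => \sum_(j < t i) x (Tagged (fun i => 'I_(t i)) j)))
  /\
  (forall lam : 'I_k -> nat, max_demand Rs lam ->
     exists x : edge t -> nat, max_matching_vector Rs x /\
       forall i, lam i = \sum_(j < t i) x (Tagged (fun i => 'I_(t i)) j)).
Proof.
(* Only the nonemptiness of the recovery sets matters. *)
move=> _ _ card_Rs _.
have Rset_neq0 : forall e : edge t, 0 < #|Rset Rs e|.
  by move=> [i j]; rewrite /Rset /=; case: (card_Rs i j) => ->.
split=> [x | lam]; first exact: max_matching_max_demand.
by move=> /(max_demand_max_matching Rset_neq0) [x x_max lam_x]; exists x.
Qed.
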